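(* Let $\nu\in\mathbb{N}$, let $(X,d)$ be a complete $\nu$-generalized metric space, and let $T:X\to X$ be a Ćirić–Matkowski contraction. Then $T$ has a unique fixed point $z$, and for every $x\in X$ the sequence $\{T^nx\}$ converges to $z$ in the strong sense.
   Context: Let $X$ be a nonempty set, $d:X\times X\to[0,\infty)$, and $\nu\in\mathbb{N}$. $(X,d)$ is a $\nu$-generalized metric space if: (1) $d(x,y)=0$ iff $x=y$; (2) $d(x,y)=d(y,x)$ for all $x,y$; (3) $d(x,y)\le d(x,u_1)+d(u_1,u_2)+\dots+d(u_\nu,y)$ for every set $\{x,u_1,\dots,u_\nu,y\}$ of $\nu+2$ pairwise distinct elements of $X$. A sequence $\{x_n\}$ in $X$ is Cauchy if $\lim_{n\to\infty}\sup\{d(x_n,x_{n+1+m}): m\in\mathbb{Z}^+\}=0$ ($\mathbb{Z}^+$ the nonnegative integers). $\{x_n\}$ converges to $x$ if $d(x,x_n)\to0$; it converges to $x$ in the strong sense if it is Cauchy and converges to $x$. $X$ is complete if every Cauchy sequence in $X$ converges. A map $T:X\to X$ is a Ćirić–Matkowski contraction if $d(Tx,Ty)<d(x,y)$ for all $x\ne y$ in $X$, and for every $\epsilon>0$ there exists $\delta>0$ such that for all $x,y\in X$, $d(x,y)<\delta+\epsilon$ implies $d(Tx,Ty)\le\epsilon$. *)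

From Stdlib Require Import Reals Lra Lia.
Open Scope R_scope.

Fixpoint rsum (n : nat) (f : nat -> R) : R :=
  match n with
  | O => 0
  | S k => rsum k f + f k
  end.

(* (X,d) is a nu-generalized metric space.  The nu+2 pairwise distinct
   points x, u_1, ..., u_nu, y are encoded as w 0 = x, w i = u_i (1<=i<=nu),
   w (nu+1) = y, with w injective on {0,...,nu+1}. *)
Definition nu_gen_metric {X : Type} (nu : nat) (d : X -> X -> R) : Prop :=
  (forall x y, 0 <= d x y) /\
  (forall x y, d x y = 0 <-> x = y) /\
  (forall x y, d x y = d y x) /\
  (forall w : nat -> X,
      (forall i j, (i <= S nu)%nat -> (j <= S nu)%nat -> i <> j -> w i <> w j) ->
      d (w O) (w (S nu)) <= rsum (S nu) (fun i => d (w i) (w (S i)))).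

(* Cauchy: lim_n sup { d(x_n, x_{n+1+m}) : m >= 0 } = 0, i.e. for every
   eps > 0 there is N such that for n >= N this sup is <= eps. *)
Definition gm_cauchy {X : Type} (d : X -> X -> R) (x : nat -> X) : Prop :=
  forall eps, eps > 0 -> exists N, forall n m, (n >= N)%nat ->
    d (x n) (x (n + 1 + m)%nat) <= eps.

Definition gm_converges {X : Type} (d : X -> X -> R) (x : nat -> X) (z : X) : Prop :=
  Un_cv (fun n => d z (x n)) 0.

Definition gm_converges_strong {X : Type} (d : X -> X -> R) (x : nat -> X) (z : X) : Prop :=
  gm_cauchy d x /\ gm_converges d x z.

Definition gm_complete {X : Type} (d : X -> X -> R) : Prop :=
  forall x : nat -> X, gm_cauchy d x -> exists z, gm_converges d x z.

Definition ciric_matkowski {X : Type} (d : X -> X -> R) (T : X -> X) : Prop :=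
  (forall x y, x <> y -> d (T x) (T y) < d x y) /\
  (forall eps, eps > 0 -> exists delta, delta > 0 /\
     forall x y, d x y < delta + eps -> d (T x) (T y) <= eps).

From Stdlib Require Import Reals Lra Lia Classical Wf_nat.
Open Scope R_scope.

(* The consecutive distances along a nontrivial orbit decrease strictly, and
   the Ćirić–Matkowski condition forces every decreasing sequence
   d(T^n x, T^(n+k) x) to tend to 0.  The polygon inequality with nu+1 sides
   then turns "all gaps d(x_n, x_(n+k)), 1 <= k <= nu, are small" into
   "d(x_n, x_(n+k)) < delta + eps for all k", which one more step of T makes
   <= eps: the orbit is Cauchy.  Its limit z is fixed, since otherwise the
   polygon z, x_N, ..., x_(N+nu-1), T z would make d(z, T z) arbitrarily
   small. *)

Lemma rsum_ext (n : nat) (f g : nat -> R) :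
  (forall i, (i < n)%nat -> f i = g i) -> rsum n f = rsum n g.
Proof.
  induction n as [|n IH]; intros Hfg; simpl; [reflexivity|].
  rewrite IH, Hfg; [reflexivity | lia | intros; apply Hfg; lia].
Qed.

Lemma rsum_le (n : nat) (f : nat -> R) (c : R) :
  (forall i, (i < n)%nat -> f i <= c) -> rsum n f <= INR n * c.
Proof.
  induction n as [|n IH]; intros Hf; simpl rsum; [simpl; lra|].
  rewrite S_INR.
  assert (rsum n f <= INR n * c) by (apply IH; intros; apply Hf; lia).
  assert (f n <= c) by (apply Hf; lia).
  lra.
Qed.

Lemma rsum_lt (n : nat) (f : nat -> R) (c : R) :
  (1 <= n)%nat -> (forall i, (i < n)%nat -> f i < c) -> rsum n f < INR n * c.
Proof.
  intros Hn Hf. destruct n as [|n]; [lia|]. simpl rsum. rewrite S_INR.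
  assert (rsum n f <= INR n * c) by (apply rsum_le; intros; left; apply Hf; lia).
  assert (f n < c) by (apply Hf; lia).
  lra.
Qed.

Lemma Un_cv0_nonneg (b : nat -> R) :
  (forall n, 0 <= b n) ->
  Un_cv b 0 <-> forall t, t > 0 -> exists N, forall n, (n >= N)%nat -> b n < t.
Proof.
  intros Hpos. unfold Un_cv, Rdist.
  split; intros Hcv t Ht; destruct (Hcv t Ht) as [N HN]; exists N; intros n Hn;
    specialize (HN n Hn); specialize (Hpos n);
    rewrite Rminus_0_r, Rabs_right in * by lra; exact HN.
Qed.

Lemma matkowski_decreasing_cv0 (b : nat -> R) :
  (forall n, 0 <= b n) ->
  (forall n, b (S n) < b n) ->
  (forall eps, eps > 0 -> exists delta, delta > 0 /\
      forall n, b n < delta + eps -> b (S n) <= eps) ->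
  Un_cv b 0.
Proof.
  intros Hpos Hdec Hcm.
  assert (Hdecr : Un_decreasing b) by (intro n; left; apply Hdec).
  assert (Hlb : has_lb b).
  { exists 0. intros y [n ->]. unfold opp_seq. specialize (Hpos n). lra. }
  destruct (decreasing_cv b Hdecr Hlb) as [l Hl].
  assert (Hinf := decreasing_ineq b l Hdecr Hl).
  replace 0 with l; [exact Hl|].
  destruct (Rtotal_order l 0) as [Hneg|[Hzero|Hposl]]; [exfalso| exact Hzero | exfalso].
  - destruct (Hl (- l)) as [N HN]; [lra|].
    specialize (HN N (le_n N)). specialize (Hpos N). unfold Rdist in HN.
    rewrite Rabs_right in HN by lra. lra.
  - (* the infimum l > 0 would be undercut two steps after b comes within delta(l) of it *)
    destruct (Hcm l Hposl) as [delta [Hdelta Hstep]].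
    destruct (Hl delta Hdelta) as [N HN].
    specialize (HN N (le_n N)). assert (Hl_le := Hinf N). unfold Rdist in HN.
    rewrite Rabs_right in HN by lra.
    assert (b (S N) <= l) by (apply Hstep; lra).
    specialize (Hdec (S N)). specialize (Hinf (S (S N))). lra.
Qed.

Section GeneralizedMetric.

Variables (X : Type) (nu : nat) (d : X -> X -> R).
Hypothesis metric : nu_gen_metric nu d.

Lemma dist_ge0 (x y : X) : 0 <= d x y.
Proof. apply metric. Qed.

Lemma dist_eq0 (x y : X) : d x y = 0 <-> x = y.
Proof. apply metric. Qed.

Lemma dist_self (x : X) : d x x = 0.
Proof. apply dist_eq0. reflexivity. Qed.

Lemma dist_sym (x y : X) : d x y = d y x.
Proof. apply metric. Qed.

Lemma dist_polygon (f : nat -> X) (y : X) :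
  (forall i j, (i <= nu)%nat -> (j <= nu)%nat -> i <> j -> f i <> f j) ->
  (forall i, (i <= nu)%nat -> f i <> y) ->
  d (f O) y <= rsum nu (fun i => d (f i) (f (S i))) + d (f nu) y.
Proof.
  intros Hinj Hy.
  set (w := fun i => if (i <=? nu)%nat then f i else y).
  assert (Hwf : forall i, (i <= nu)%nat -> w i = f i).
  { intros i Hi. unfold w. destruct (Nat.leb_spec i nu); [reflexivity|lia]. }
  assert (Hwy : w (S nu) = y).
  { unfold w. destruct (Nat.leb_spec (S nu) nu); [lia|reflexivity]. }
  assert (Hw : forall i j, (i <= S nu)%nat -> (j <= S nu)%nat -> i <> j -> w i <> w j).
  { intros i j Hi Hj Hij.
    destruct (Nat.eq_dec i (S nu)) as [->|Hi']; destruct (Nat.eq_dec j (S nu)) as [->|Hj'].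
    - lia.
    - rewrite Hwy, Hwf by lia. apply not_eq_sym, Hy. lia.
    - rewrite Hwy, Hwf by lia. apply Hy. lia.
    - rewrite !Hwf by lia. apply Hinj; lia. }
  assert (Hpoly := proj2 (proj2 (proj2 metric)) w Hw).
  simpl rsum in Hpoly. rewrite Hwy, !Hwf in Hpoly by lia.
  rewrite (rsum_ext nu _ (fun i => d (f i) (f (S i)))) in Hpoly; [exact Hpoly|].
  intros i Hi. rewrite !Hwf by lia. reflexivity.
Qed.

Lemma gm_converges_strong_eventually_const (x : nat -> X) (z : X) (N : nat) :
  (forall n, (n >= N)%nat -> x n = z) -> gm_converges_strong d x z.
Proof.
  intros Hconst. split.
  - intros eps Heps. exists N. intros n m Hn.
    rewrite !Hconst by lia. rewrite dist_self. lra.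
  - apply Un_cv0_nonneg; [intro; apply dist_ge0|].
    intros t Ht. exists N. intros n Hn. rewrite Hconst, dist_self by lia. exact Ht.
Qed.

Section Contraction.

Variable T : X -> X.
Hypothesis nu_ge1 : (1 <= nu)%nat.
Hypothesis contraction : ciric_matkowski d T.

Lemma dist_contract_lt (x y : X) : x <> y -> d (T x) (T y) < d x y.
Proof. apply contraction. Qed.

Lemma dist_contract_le (x y : X) : d (T x) (T y) <= d x y.
Proof.
  destruct (classic (x = y)) as [->|Hxy].
  - rewrite !dist_self. lra.
  - left. apply dist_contract_lt, Hxy.
Qed.

Lemma fixed_point_unique (z w : X) : T z = z -> T w = w -> w = z.
Proof.
  intros Hz Hw. apply NNPP. intros Hwz.
  assert (H := dist_contract_lt w z Hwz). rewrite Hz, Hw in H. lra.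
Qed.

Section Orbit.

Variable x : nat -> X.
Hypothesis orbit_succ : forall n, x (S n) = T (x n).
Hypothesis orbit_moves : forall n, x (S n) <> x n.

Lemma orbit_dist_succ_lt (p q : nat) :
  x p <> x q -> d (x (S p)) (x (S q)) < d (x p) (x q).
Proof. rewrite !orbit_succ. apply dist_contract_lt. Qed.

(* x i = x j with i < j would give d(x j, x (S j)) = d(x i, x (S i)),
   although the consecutive distances decrease strictly. *)
Lemma orbit_injective (i j : nat) : i <> j -> x i <> x j.
Proof.
  assert (Hlt : forall i j, (i < j)%nat -> x i <> x j).
  { clear i j. intros i j Hij Heq.
    set (a := fun n => d (x n) (x (S n))).
    assert (Hstep : forall n, a (S n) < a n)
      by (intro n; apply orbit_dist_succ_lt, not_eq_sym, orbit_moves).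
    assert (a j <= a (S i)) by (apply decreasing_prop; [intro n; left; apply Hstep | lia]).
    assert (a (S i) < a i) by apply Hstep.
    assert (a j = a i) by (unfold a; rewrite !orbit_succ, Heq; reflexivity).
    lra. }
  intros Hij. destruct (proj1 (Nat.lt_gt_cases i j) Hij) as [H|H].
  - apply Hlt, H.
  - apply not_eq_sym, Hlt, H.
Qed.

Lemma orbit_gap_cv0 (k : nat) :
  (1 <= k)%nat -> Un_cv (fun n => d (x n) (x (n + k))) 0.
Proof.
  intros Hk. apply matkowski_decreasing_cv0.
  - intros n. apply dist_ge0.
  - intros n. simpl. apply orbit_dist_succ_lt, orbit_injective. lia.
  - intros eps Heps. destruct (proj2 contraction eps Heps) as [delta [Hdelta Hcm]].
    exists delta. split; [exact Hdelta|].
    intros n Hn. simpl. rewrite !orbit_succ. apply Hcm, Hn.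
Qed.

Lemma orbit_gaps_vanish (t : R) (K : nat) :
  t > 0 -> exists N, forall k n, (1 <= k <= K)%nat -> (n >= N)%nat ->
    d (x n) (x (n + k)) < t.
Proof.
  intros Ht. induction K as [|K [N1 HN1]].
  - exists O. intros. lia.
  - assert (Hcv := orbit_gap_cv0 (S K) ltac:(lia)).
    destruct (proj1 (Un_cv0_nonneg _ (fun n => dist_ge0 _ _)) Hcv t Ht) as [N2 HN2].
    exists (Nat.max N1 N2). intros k n Hk Hn.
    destruct (Nat.eq_dec k (S K)) as [->|Hne].
    + apply HN2. lia.
    + apply HN1; lia.
Qed.

Lemma orbit_polygon (n k : nat) :
  (nu < k)%nat ->
  d (x n) (x (n + k)) <=
  rsum nu (fun i => d (x (n + i)) (x (n + S i))) + d (x (n + nu)) (x (n + k)).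
Proof.
  intros Hk.
  assert (H := dist_polygon (fun i => x (n + i)) (x (n + k))).
  cbv beta in H. rewrite Nat.add_0_r in H. apply H.
  - intros i j Hi Hj Hij. apply orbit_injective. lia.
  - intros i Hi. apply orbit_injective. lia.
Qed.

Lemma orbit_cm_iterate (eps delta : R) (p q : nat) :
  delta > 0 ->
  (forall u v, d u v < delta + eps -> d (T u) (T v) <= eps) ->
  d (x p) (x q) < delta + eps ->
  forall j, d (x (S j + p)) (x (S j + q)) <= eps.
Proof.
  intros Hdelta Hcm Hpq. induction j as [|j IH]; simpl; rewrite !orbit_succ; apply Hcm.
  - exact Hpq.
  - simpl in IH. rewrite !orbit_succ in IH. lra.
Qed.

(* A gap k > nu is split by the polygon x_n, ..., x_(n+nu), x_(n+k), whose
   last side is the image under T^nu of the shorter gap k - nu. *)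
Lemma orbit_tail_bound (eps delta : R) (N : nat) :
  eps > 0 -> delta > 0 ->
  (forall u v, d u v < delta + eps -> d (T u) (T v) <= eps) ->
  (forall k n, (1 <= k <= nu)%nat -> (n >= N)%nat ->
     d (x n) (x (n + k)) < delta / INR nu) ->
  forall k n, (1 <= k)%nat -> (n >= N)%nat -> d (x n) (x (n + k)) < delta + eps.
Proof.
  intros Heps Hdelta Hcm Hgaps.
  assert (Hnu : 1 <= INR nu) by (apply (le_INR 1); exact nu_ge1).
  assert (Hmul : INR nu * (delta / INR nu) = delta) by (field; lra).
  induction k as [k IH] using lt_wf_ind. intros n Hk Hn.
  destruct (Compare_dec.le_lt_dec k nu) as [Hle|Hgt].
  - specialize (Hgaps k n ltac:(lia) Hn). nra.
  - assert (Hfar : d (x (n + nu)) (x (n + k)) <= eps).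
    { assert (H := orbit_cm_iterate eps delta n (n + (k - nu)) Hdelta Hcm
                     (IH (k - nu)%nat ltac:(lia) n ltac:(lia) Hn) (nu - 1)).
      replace (S (nu - 1) + n)%nat with (n + nu)%nat in H by lia.
      replace (S (nu - 1) + (n + (k - nu)))%nat with (n + k)%nat in H by lia.
      exact H. }
    assert (Hsum : rsum nu (fun i => d (x (n + i)) (x (n + S i))) < INR nu * (delta / INR nu)).
    { apply rsum_lt; [exact nu_ge1|]. intros i Hi.
      replace (n + S i)%nat with (n + i + 1)%nat by lia. apply Hgaps; lia. }
    assert (Hpoly := orbit_polygon n k Hgt).
    lra.
Qed.

Lemma orbit_cauchy : gm_cauchy d x.
Proof.
  intros eps Heps. destruct (proj2 contraction eps Heps) as [delta [Hdelta Hcm]].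
  assert (Hnu : 0 < INR nu) by (apply (lt_INR 0); exact nu_ge1).
  destruct (orbit_gaps_vanish (delta / INR nu) nu) as [N HN];
    [apply Rdiv_lt_0_compat; lra|].
  exists (S N). intros [|n] m Hn; [lia|].
  replace (S n + 1 + m)%nat with (S (n + (1 + m))) by lia.
  rewrite !orbit_succ. apply Hcm, (orbit_tail_bound eps delta N); auto; lia.
Qed.

Lemma orbit_limit_fixed (z : X) : gm_converges d x z -> T z = z.
Proof.
  intros Hz. apply NNPP. intros Hfix.
  set (D := d z (T z)).
  assert (HD : D > 0).
  { destruct (dist_ge0 z (T z)) as [H|H]; [exact H|].
    exfalso. apply Hfix. symmetry. apply dist_eq0. symmetry. exact H. }
  set (c := D / (INR nu + 1)).
  assert (Hnu : 1 <= INR nu) by (apply (le_INR 1); exact nu_ge1).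
  assert (Hc0 : c > 0) by (unfold c; apply Rdiv_lt_0_compat; lra).
  assert (HcD : INR nu * c + c = D) by (unfold c; field; lra).
  assert (HcltD : c < D) by nra.
  destruct (proj1 (Un_cv0_nonneg _ (fun n => dist_ge0 _ _)) Hz c Hc0) as [N1 HN1].
  assert (HTz : exists N, forall n, (n >= N)%nat -> d (T z) (x n) < c).
  { exists (S N1). intros [|n] Hn; [lia|]. rewrite orbit_succ.
    eapply Rle_lt_trans; [apply dist_contract_le | apply HN1; lia]. }
  destruct HTz as [N2 HN2].
  destruct (orbit_gaps_vanish c 1 Hc0) as [N3 HN3].
  set (N := Nat.max N1 (Nat.max N2 N3)).
  assert (Hxz : forall m, (m >= N)%nat -> x m <> z).
  { intros m Hm Heq. specialize (HN2 m ltac:(lia)).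
    rewrite Heq, dist_sym in HN2. fold D in HN2. lra. }
  assert (HxTz : forall m, (m >= N)%nat -> x m <> T z).
  { intros m Hm Heq. specialize (HN1 m ltac:(lia)).
    rewrite Heq in HN1. fold D in HN1. lra. }
  set (f := fun i => match i with O => z | S j => x (N + j)%nat end).
  assert (Hf : forall i j, (i <= nu)%nat -> (j <= nu)%nat -> i <> j -> f i <> f j).
  { intros [|i] [|j] Hi Hj Hij; simpl.
    - lia.
    - apply not_eq_sym, Hxz. lia.
    - apply Hxz. lia.
    - apply orbit_injective. lia. }
  assert (HfTz : forall i, (i <= nu)%nat -> f i <> T z).
  { intros [|i] Hi; simpl; [apply not_eq_sym, Hfix | apply HxTz; lia]. }
  assert (Hpoly := dist_polygon f (T z) Hf HfTz).
  change (f O) with z in Hpoly. fold D in Hpoly.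
  assert (Hlast : d (f nu) (T z) < c).
  { rewrite <- (Nat.succ_pred_pos nu) by lia. simpl.
    rewrite dist_sym. apply HN2. lia. }
  assert (Hsum : rsum nu (fun i => d (f i) (f (S i))) < INR nu * c).
  { apply rsum_lt; [exact nu_ge1|]. intros [|i] Hi; simpl.
    - rewrite Nat.add_0_r. apply HN1. lia.
    - replace (N + S i)%nat with (N + i + 1)%nat by lia. apply HN3; lia. }
  lra.
Qed.

End Orbit.

Lemma iter_converges_strong (x0 : X) :
  gm_complete d ->
  exists z, T z = z /\ gm_converges_strong d (fun n => Nat.iter n T x0) z.
Proof.
  intros Hcomplete.
  destruct (classic (exists n, Nat.iter (S n) T x0 = Nat.iter n T x0)) as [[N HN]|Hmoves].
  - exists (Nat.iter N T x0). split; [exact HN|].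
    apply gm_converges_strong_eventually_const with N. intros n Hn.
    replace n with (n - N + N)%nat by lia. rewrite Nat.iter_add.
    apply (Nat.iter_invariant _ _ _ (fun y => y = Nat.iter N T x0)); [|reflexivity].
    intros y ->. exact HN.
  - assert (Hmove : forall n, Nat.iter (S n) T x0 <> Nat.iter n T x0)
      by (intros n Heq; apply Hmoves; exists n; exact Heq).
    assert (Hsucc : forall n, Nat.iter (S n) T x0 = T (Nat.iter n T x0)) by reflexivity.
    assert (Hcauchy := orbit_cauchy _ Hsucc Hmove).
    destruct (Hcomplete _ Hcauchy) as [z Hz].
    exists z. split; [exact (orbit_limit_fixed _ Hsucc Hmove z Hz) | split; assumption].
Qed.

End Contraction.

End GeneralizedMetric.

Theorem corollary3p4 (nu : nat) (X : Type) (d : X -> X -> R) (T : X -> X) :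
  inhabited X ->
  (1 <= nu)%nat ->
  nu_gen_metric nu d ->
  gm_complete d ->
  ciric_matkowski d T ->
  exists z : X, T z = z /\ (forall w : X, T w = w -> w = z) /\
    forall x : X, gm_converges_strong d (fun n => Nat.iter n T x) z.
Proof.
  intros [x0] Hnu Hmetric Hcomplete Hcm.
  destruct (iter_converges_strong X nu d Hmetric T Hnu Hcm x0 Hcomplete) as [z [Hz _]].
  exists z. split; [exact Hz | split].
  - intros w Hw. exact (fixed_point_unique X d T Hcm z w Hz Hw).
  - intros x.
    destruct (iter_converges_strong X nu d Hmetric T Hnu Hcm x Hcomplete) as [z' [Hz' Hconv]].
    rewrite (fixed_point_unique X d T Hcm z z' Hz Hz') in Hconv. exact Hconv.
Qed.
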